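(* Let $\mathcal V$ be a finite set of nodes, $\mathcal P$ a finite set of labels, $\mathcal E$ a set of unordered pairs of nodes, $\theta_{ip}\in\mathbb R$, and $\theta_{ij,pq}\le0$ for all $\{i,j\}\in\mathcal E$, $p,q\in\mathcal P$. Let $w^m_{ip},c^m\in\mathbb R$ ($m=1,\dots,M$) and $v^k_{ip},d^k\in\mathbb R$ ($k=1,\dots,K$). For $\vec y\in\{0,1\}^{\mathcal V\times\mathcal P}$, $\vec\lambda\in\mathbb R^{\mathcal V}$, $\vec\xi\in\mathbb R^M$, $\vec\pi\in\mathbb R^K$ let $$L(\vec y,\vec\lambda,\vec\xi,\vec\pi)=E_I(\vec y)+\sum_{i}\lambda_i\Big(\sum_p y_{ip}-1\Big)+\sum_{m=1}^M\xi_m\Big(\sum_{i,p}w^m_{ip}y_{ip}-c^m\Big)+\sum_{k=1}^K\pi_k\Big(\sum_{i,p}v^k_{ip}y_{ip}-d^k\Big),$$ where $E_I(\vec y)=\sum_{i,p}\theta_{ip}y_{ip}+\sum_{\{i,j\}\in\mathcal E}\sum_{p,q}\theta_{ij,pq}y_{ip}y_{jq}$, and $D(\vec\lambda,\vec\xi,\vec\pi)=\min_{\vec y\in\{0,1\}^{\mathcal V\times\mathcal P}}L(\vec y,\vec\lambda,\vec\xi,\vec\pi)$. Then the maximum of $D(\vec\lambda,\vec\xi,\vec\pi)$ over $\vec\lambda\in\mathbb R^{\mathcal V}$, $\vec\xi\in\mathbb R^M$, $\vec\pi\in\mathbb R^K$ with $\pi_k\ge0$ for all $k$ equals the optimal value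 of the linear program $$\min_{\vec y}\ \sum_{i,p}\theta_{ip}y_{ip}+\sum_{\{i,j\}\in\mathcal E}\sum_{p,q}\theta_{ij,pq}y_{ij,pq}$$ subject to $y_{ip}\in[0,1]$; $y_{ij,pq}\in[0,1]$; $y_{ij,pq}\le y_{ip}$, $y_{ij,pq}\le y_{jq}$ for all $\{i,j\}\in\mathcal E$, $p,q\in\mathcal P$; $\sum_p y_{ip}=1$ for all $i\in\mathcal V$; $\sum_{i,p}w^m_{ip}y_{ip}=c^m$ for $m=1,\dots,M$; and $\sum_{i,p}v^k_{ip}y_{ip}\le d^k$ for $k=1,\dots,K$.
   Context: This is pairwise energy minimization $E(\vec x)=\sum_i\theta_i(x_i)+\sum_{\{i,j\}}\theta_{ij}(x_i,x_j)$ in indicator variables $y_{ip}=[x_i=p]$, subject additionally to global linear equality and inequality constraints on the indicators; all these constraints together with the consistency constraints are relaxed by Lagrange multipliers ($\vec\pi\ge0$ for inequalities). *)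

From HB Require Import structures.
From mathcomp Require Import all_boot all_order all_algebra.
From mathcomp Require Import reals.
Set Implicit Arguments. Unset Strict Implicit. Unset Printing Implicit Defensive.
Import Order.TTheory GRing.Theory Num.Theory.
Local Open Scope ring_scope.

(* Nodes V, labels P (finite types); edges E : a set of pairs (i,j) representing
   unordered pairs {i,j} (hypotheses in the theorem: no loops, each unordered
   pair listed in at most one orientation).
   th1 i p = theta_{ip}, th2 i j p q = theta_{ij,pq} (for (i,j) in E).
   w m i p = w^m_{ip}, c m = c^m ; v k i p = v^k_{ip}, d k = d^k. *)

Section Energy.
Variables (R : realType) (V P : finType) (E : {set V * V}).
Variables (th1 : V -> P -> R) (th2 : V -> V -> P -> P -> R).
Variables (M K : nat) (w : 'I_M -> V -> P -> R) (c : 'I_M -> R)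
          (v : 'I_K -> V -> P -> R) (d : 'I_K -> R).

Definition yval (y : {ffun V * P -> bool}) (i : V) (p : P) : R := (y (i, p))%:R.

Definition energyI (y : {ffun V * P -> bool}) : R :=
  \sum_(i : V) \sum_(p : P) th1 i p * yval y i p
  + \sum_(e in E) \sum_(p : P) \sum_(q : P)
        th2 e.1 e.2 p q * yval y e.1 p * yval y e.2 q.

Definition lagrangian (y : {ffun V * P -> bool})
   (lam : V -> R) (xi : 'I_M -> R) (pi : 'I_K -> R) : R :=
  energyI y
  + \sum_(i : V) lam i * (\sum_(p : P) yval y i p - 1)
  + \sum_(m < M) xi m * (\sum_(i : V) \sum_(p : P) w m i p * yval y i p - c m)
  + \sum_(k < K) pi k * (\sum_(i : V) \sum_(p : P) v k i p * yval y i p - d k).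

Definition dualfun (lam : V -> R) (xi : 'I_M -> R) (pi : 'I_K -> R) : R :=
  \big[Num.min/lagrangian [ffun => false] lam xi pi]_(y : {ffun V * P -> bool})
     lagrangian y lam xi pi.

Definition lp_feasible (y1 : V -> P -> R) (y2 : V -> V -> P -> P -> R) : Prop :=
  [/\ (forall i p, 0 <= y1 i p <= 1),
      (forall e, e \in E -> forall p q, 0 <= y2 e.1 e.2 p q <= 1) /\
      (forall e, e \in E -> forall p q,
          y2 e.1 e.2 p q <= y1 e.1 p /\ y2 e.1 e.2 p q <= y1 e.2 q),
      (forall i, \sum_(p : P) y1 i p = 1),
      (forall m, \sum_(i : V) \sum_(p : P) w m i p * y1 i p = c m) &
      (forall k, \sum_(i : V) \sum_(p : P) v k i p * y1 i p <= d k)].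

Definition lp_objective (y1 : V -> P -> R) (y2 : V -> V -> P -> P -> R) : R :=
  \sum_(i : V) \sum_(p : P) th1 i p * y1 i p
  + \sum_(e in E) \sum_(p : P) \sum_(q : P) th2 e.1 e.2 p q * y2 e.1 e.2 p q.

End Energy.

From HB Require Import structures.
From mathcomp Require Import all_boot all_order all_algebra.
From mathcomp Require Import reals.
From mathcomp Require Import ring lra.
Import Order.TTheory GRing.Theory Num.Theory.
Local Open Scope ring_scope.
Set Implicit Arguments. Unset Strict Implicit.

(* The dual function is the LP dual of a convexified problem: minimize the
   expected energy over probability distributions [mu] on labelings subject to
   the constraints holding in expectation.  By LP duality, proved here by
   Fourier-Motzkin elimination, max D is the optimum of that problem, and the
   marginals [E y_ip], [E (y_ip y_jq)] of an optimal [mu] are LP-feasible with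
   the same objective, so the LP optimum is at most max D.  Conversely, for an
   LP-feasible [y] thresholding at a uniform level [t] in [[0, 1]] writes [y_ip]
   as the average of the labelings [[t <= y_ip]]; as [theta_ij,pq <= 0] and
   [y_ij,pq <= min (y_ip, y_jq)], the LP Lagrangian at [y] dominates the average
   of the Lagrangians of these labelings, hence D is at most the LP objective.
   If the LP is infeasible so is the convexified problem, and a Farkas
   certificate for it is a direction along which D grows without bound. *)

Lemma sum_option (F : nmodType) (J : finType) (f : option J -> F) :
  \sum_(o : option J) f o = f None + \sum_(j : J) f (Some j).
Proof.
rewrite (bigD1 None) //= (reindex_omap Some id) //=; last by case.
by congr (_ + _); apply: eq_bigl => j; rewrite eqxx.
Qed.

Section SeqExtremum.
Variable F : realFieldType.

Lemma exists_between (L U : seq F) :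
  (forall l u, l \in L -> u \in U -> l <= u) ->
  exists t, (forall l, l \in L -> l <= t) /\ (forall u, u \in U -> t <= u).
Proof.
move=> LU; pose m := \big[Num.min/0]_(u <- U) u.
have mU u : u \in U -> m <= u by move=> uU; apply: ge_bigmin_seq.
exists (\big[Num.max/m]_(l <- L) l); split=> [l lL|u uU].
  exact: le_bigmax_seq.
by rewrite big_seq; apply: bigmax_le => [|l lL]; [exact: mU uU | exact: LU _ _ lL uU].
Qed.

Lemma exists_argmax_seq (T : eqType) (s : seq T) (f : T -> F) : s != [::] ->
  exists2 x, x \in s & forall y, y \in s -> f y <= f x.
Proof.
elim: s => [//|a [|b s] IH] _.
  by exists a; rewrite ?mem_head // => y; rewrite inE => /eqP->.
have [x xs xmax] := IH isT.
have [le_ax|lt_xa] := leP (f a) (f x).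
  exists x; first by rewrite inE xs orbT.
  by move=> y; rewrite inE => /predU1P[->|/xmax].
exists a; first exact: mem_head.
by move=> y; rewrite inE => /predU1P[->//|/xmax/le_trans]; apply; apply: ltW.
Qed.

End SeqExtremum.

Section FourierMotzkin.
Variables (F : realFieldType) (X : finType).

(* [(a, b)] stands for the inequality [b <= \sum_j a j * x j]. *)
Definition ineq := ({ffun X -> F} * F)%type.

Definition holds (x : X -> F) (r : ineq) : bool := r.2 <= \sum_j r.1 j * x j.

Definition ineq_comb (a b : F) (r s : ineq) : ineq :=
  ([ffun j => a * r.1 j + b * s.1 j], a * r.2 + b * s.2).

Definition fm_step (k : X) (S : seq ineq) : seq ineq :=
  [seq r <- S | (r : ineq).1 k == 0] ++
  [seq ineq_comb (- (s : ineq).1 k) ((r : ineq).1 k) r s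
     | r <- [seq r <- S | 0 < (r : ineq).1 k], s <- [seq s <- S | (s : ineq).1 k < 0]].

Definition fm_elim (ks : seq X) (S : seq ineq) : seq ineq :=
  foldl (fun S k => fm_step k S) S ks.

Lemma sum_ineq_comb a b (r s : ineq) x :
  \sum_j (ineq_comb a b r s).1 j * x j =
  a * \sum_j r.1 j * x j + b * \sum_j s.1 j * x j.
Proof. by rewrite !mulr_sumr -big_split; apply: eq_bigr => j _ /=; rewrite ffunE; ring. Qed.

Lemma holds_comb a b (r s : ineq) x : 0 <= a -> 0 <= b ->
  holds x r -> holds x s -> holds x (ineq_comb a b r s).
Proof. by move=> a0 b0 hr hs; rewrite /holds sum_ineq_comb lerD // ler_wpM2l. Qed.

Lemma fm_step_ind k (S : seq ineq) (P : ineq -> Prop) :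
  (forall r : ineq, r \in S -> r.1 k = 0 -> P r) ->
  (forall r s : ineq, r \in S -> s \in S -> 0 < r.1 k -> s.1 k < 0 ->
     P (ineq_comb (- s.1 k) (r.1 k) r s)) ->
  forall r, r \in fm_step k S -> P r.
Proof.
move=> P0 Pcomb r; rewrite mem_cat => /orP[|].
  by rewrite mem_filter => /andP[/eqP r0 rS]; exact: P0.
case/allpairsP=> -[r' s] [/=]; rewrite !mem_filter => /andP[r'_pos r'S] /andP[s_neg sS] ->.
exact: Pcomb.
Qed.

Lemma fm_step_holds k (S : seq ineq) x : all (holds x) S -> all (holds x) (fm_step k S).
Proof.
move=> /allP Sx; apply/allP; apply: fm_step_ind => [r rS _|r s rS sS r_pos s_neg].
  exact: Sx.
by apply: holds_comb; rewrite ?oppr_ge0 ?ltW //; exact: Sx.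
Qed.

Lemma fm_step_coef k (S : seq ineq) r : r \in fm_step k S -> r.1 k = 0.
Proof. by move: r; apply: fm_step_ind => // r' s *; rewrite ffunE /=; ring. Qed.

Lemma fm_step_coef_stable j k (S : seq ineq) :
  (forall r, r \in S -> r.1 j = 0) -> forall r, r \in fm_step k S -> r.1 j = 0.
Proof.
move=> S0; apply: fm_step_ind => [r rS _|r s rS sS _ _]; first exact: S0.
by rewrite ffunE /= !S0 //; ring.
Qed.

Lemma fm_step_lift k (S : seq ineq) x : all (holds x) (fm_step k S) ->
  exists t, all (holds [eta x with k |-> t]) S.
Proof.
move=> /allP Sx.
pose rest (r : ineq) := \sum_j r.1 j * x j - r.1 k * x k.
have holdsE t r : holds [eta x with k |-> t] r = (r.2 <= rest r + r.1 k * t).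
  rewrite /holds (bigD1 k) //= eqxx.
  rewrite (eq_bigr (fun j => r.1 j * x j)) => [|j /negbTE -> //].
  by rewrite /rest [in RHS](bigD1 k) //=; congr (_ <= _); ring.
pose lo (r : ineq) := (r.2 - rest r) / r.1 k.
pose up (r : ineq) := (rest r - r.2) / - r.1 k.
pose los := [seq lo r | r <- [seq r <- S | 0 < (r : ineq).1 k]].
pose ups := [seq up s | s <- [seq s <- S | (s : ineq).1 k < 0]].
have lo_le_up l u : l \in los -> u \in ups -> l <= u.
  move=> /mapP[r + ->] /mapP[s + ->]; rewrite !mem_filter.
  move=> /andP[r_pos rS] /andP[s_neg sS].
  have rs_comb : ineq_comb (- s.1 k) (r.1 k) r s \in fm_step k S.
    rewrite mem_cat; apply/orP; right; apply: (allpairs_f (fun r s => ineq_comb _ _ r s));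
      by rewrite mem_filter ?r_pos ?s_neg.
  have := Sx _ rs_comb; rewrite /holds sum_ineq_comb /= /lo /up.
  rewrite ler_pdivrMr ?oppr_gt0 // mulrAC ler_pdivlMr // /rest; nra.
have [t [lo_t t_up]] := exists_between lo_le_up.
exists t; apply/allP => r rS; rewrite holdsE.
have [r_neg|r_pos|r0] := ltgtP (r.1 k) 0.
- have := t_up (up r); rewrite map_f ?mem_filter ?r_neg // => /(_ isT).
  by rewrite /up ler_pdivlMr ?oppr_gt0 // => h; nra.
- have := lo_t (lo r); rewrite map_f ?mem_filter ?r_pos // => /(_ isT).
  by rewrite /lo ler_pdivrMr // => h; nra.
- have := Sx r; rewrite mem_cat mem_filter r0 eqxx rS => /(_ isT).
  by rewrite /rest r0 !mul0r subr0 addr0.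
Qed.

Lemma fm_elim_holds ks (S : seq ineq) x :
  all (holds x) S -> all (holds x) (fm_elim ks S).
Proof. by elim: ks S => //= k ks IH S Sx; apply/IH/fm_step_holds. Qed.

Lemma fm_elim_coef ks (S : seq ineq) k :
  k \in ks -> forall r, r \in fm_elim ks S -> r.1 k = 0.
Proof.
have stable j ks' (S' : seq ineq) : (forall r, r \in S' -> r.1 j = 0) ->
    forall r, r \in fm_elim ks' S' -> r.1 j = 0.
  by elim: ks' S' => //= k' ks' IH S' S'0; apply/IH/fm_step_coef_stable.
elim: ks S => //= k' ks IH S; rewrite inE => /predU1P[->|kks]; last exact: IH.
by apply: stable => r; apply: fm_step_coef.
Qed.

Lemma fm_elim_lift ks (S : seq ineq) x : all (holds x) (fm_elim ks S) ->
  exists2 x', (forall j, j \notin ks -> x' j = x j) & all (holds x') S.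
Proof.
elim: ks S x => [|k ks IH] S x /=; first by exists x.
move=> /IH[x' x'x /fm_step_lift[t St]]; exists [eta x' with k |-> t] => // j.
by rewrite inE negb_or /= => /andP[/negbTE-> /x'x].
Qed.

Variables (I : finType) (A : I -> ineq).

Definition in_cone (r : ineq) := exists y : I -> F, [/\ (forall i, 0 <= y i),
  (forall j, r.1 j = \sum_i y i * (A i).1 j) & r.2 = \sum_i y i * (A i).2].

Lemma in_cone_comb a b (r s : ineq) : 0 <= a -> 0 <= b ->
  in_cone r -> in_cone s -> in_cone (ineq_comb a b r s).
Proof.
move=> a0 b0 [y [y0 y1 y2]] [z [z0 z1 z2]].
exists (fun i => a * y i + b * z i); split=> [i||].
- by rewrite addr_ge0 ?mulr_ge0.
- move=> j /=; rewrite ffunE y1 z1 !mulr_sumr -big_split.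
  by apply: eq_bigr => i _ /=; ring.
- by rewrite /= y2 z2 !mulr_sumr -big_split; apply: eq_bigr => i _ /=; ring.
Qed.

Lemma fm_elim_cone ks (S : seq ineq) : {in S, forall r, in_cone r} ->
  {in fm_elim ks S, forall r, in_cone r}.
Proof.
elim: ks S => //= k ks IH S elim_in_cone; apply: IH; move=> r; move: r.
apply: fm_step_ind => [r rS _|r s rS sS r_pos s_neg]; first exact: elim_in_cone.
by apply: in_cone_comb; rewrite ?oppr_ge0 ?ltW //; exact: elim_in_cone.
Qed.

Lemma in_cone_gen i : in_cone (A i).
Proof.
exists (fun i' => (i' == i)%:R); split=> [i'||]; first by rewrite ler0n.
- by move=> j; rewrite (bigD1 i) //= eqxx mul1r big1 ?addr0 // => i' /negbTE->; rewrite mul0r.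
- by rewrite (bigD1 i) //= eqxx mul1r big1 ?addr0 // => i' /negbTE->; rewrite mul0r.
Qed.

End FourierMotzkin.

Section LPDuality.
Variables (F : realFieldType) (I J : finType).
Variables (A : I -> J -> F) (b : I -> F) (c : J -> F).

Definition primal_feasible (x : J -> F) := forall i, b i <= \sum_j A i j * x j.

Definition dual_feasible (y : I -> F) :=
  (forall i, 0 <= y i) /\ forall j, \sum_i y i * A i j = c j.

Lemma weak_duality x y : primal_feasible x -> dual_feasible y ->
  \sum_i y i * b i <= \sum_j c j * x j.
Proof.
move=> xP [y0 yA].
have -> : \sum_j c j * x j = \sum_i y i * \sum_j A i j * x j.
  under eq_bigr do rewrite -yA mulr_suml; rewrite exchange_big.
  by apply: eq_bigr => i _; rewrite mulr_sumr; apply: eq_bigr => j _; rewrite mulrA.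
by apply: ler_sum => i _; rewrite ler_wpM2l.
Qed.

(* The extra coordinate [None] is an upper bound on the objective value. *)
Definition lp_ineq (o : option I) : ineq F (option J) :=
  if o is Some i then ([ffun o' => if o' is Some j then A i j else 0], b i)
  else ([ffun o' => if o' is Some j then - c j else 1], 0).

Lemma all_holds_lp_ineq x :
  all (holds x) [seq lp_ineq o | o <- enum {: option I}] <->
  primal_feasible (fun j => x (Some j)) /\ \sum_j c j * x (Some j) <= x None.
Proof.
have holdsE o : holds x (lp_ineq o) = if o is Some i
    then b i <= \sum_j A i j * x (Some j) else \sum_j c j * x (Some j) <= x None.
  rewrite /holds sum_option; case: o => [i|] /=; rewrite !ffunE ?mul0r ?add0r.
    by under eq_bigr do rewrite ffunE.
  under eq_bigr do rewrite ffunE mulNr.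
  by rewrite mul1r sumrN subr_ge0.
split=> [/allP xP|[xP cx]].
  have xP' o : holds x (lp_ineq o) by apply/xP/map_f; rewrite mem_enum.
  by split=> [i|]; [have := xP' (Some i) | have := xP' None]; rewrite holdsE.
by apply/allP => _ /mapP[o _ ->]; rewrite holdsE; case: o.
Qed.

Let gens := [seq lp_ineq o | o <- enum {: option I}].
Let coords := [seq Some j | j <- enum J].
Let S := fm_elim coords gens.
Let ratio (r : ineq F (option J)) := r.2 / r.1 None.

Lemma elim_coef_Some r j : r \in S -> r.1 (Some j) = 0.
Proof. by move=> rS; apply: (fm_elim_coef _ rS); rewrite map_f ?mem_enum. Qed.

Lemma holds_elim x r : r \in S -> holds x r = (r.2 <= r.1 None * x None).
Proof.
by move=> rS; rewrite /holds sum_option big1 ?addr0 // => j _; rewrite elim_coef_Some ?mul0r.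
Qed.

Lemma elim_in_cone r : r \in S -> exists y : option I -> F, [/\ (forall o, 0 <= y o),
   (forall j, \sum_i y (Some i) * A i j = y None * c j),
   r.1 None = y None & r.2 = \sum_i y (Some i) * b i].
Proof.
move=> rS.
have gen : {in gens, forall r, in_cone lp_ineq r}.
  by move=> _ /mapP[o _ ->]; apply: in_cone_gen.
have [y [y0 y1 y2]] := fm_elim_cone gen rS.
exists y; split=> // [j||].
- have := elim_coef_Some j rS; rewrite y1 sum_option /= ffunE mulrN => /eqP.
  rewrite addrC subr_eq0 => /eqP <-.
  by apply: eq_bigr => i _; rewrite ffunE.
- by rewrite y1 sum_option /= ffunE mulr1 big1 ?addr0 // => i _; rewrite ffunE mulr0.
- by rewrite y2 sum_option /= mulr0 add0r.
Qed.

Lemma elim_coef_None_ge0 r : r \in S -> 0 <= r.1 None.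
Proof. by case/elim_in_cone=> y [y0 _ -> _]. Qed.

Lemma primal_le_of_bounds t :
  (forall r, r \in S -> r.1 None = 0 -> r.2 <= 0) ->
  (forall r, r \in S -> 0 < r.1 None -> ratio r <= t) ->
  exists2 x, primal_feasible x & \sum_j c j * x j <= t.
Proof.
move=> zero_rows pos_rows.
have /fm_elim_lift[x' x'x /all_holds_lp_ineq[x'P cx']] :
    all (holds (fun o => if o is Some _ then 0 else t)) S.
  apply/allP => r rS; rewrite holds_elim //=.
  have [r0|r_pos] := eqVneq (r.1 None) 0; first by rewrite r0 mul0r zero_rows.
  have {}r_pos : 0 < r.1 None by rewrite lt_def r_pos elim_coef_None_ge0.
  by rewrite mulrC -ler_pdivrMr // pos_rows.
exists (fun j => x' (Some j)) => //.
by rewrite x'x in cx' => //; apply/mapP => -[].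
Qed.

Lemma fm_farkas_alternative : (exists x, primal_feasible x) \/
  exists y : I -> F, [/\ (forall i, 0 <= y i), (forall j, \sum_i y i * A i j = 0)
                      & 0 < \sum_i y i * b i].
Proof.
have [/hasP[r rS /andP[/eqP r0 r_pos]]|/hasPn no_cert] :=
  boolP (has (fun r : ineq F (option J) => (r.1 None == 0) && (0 < r.2)) S).
  right; have [y [y0 yA y1 yb]] := elim_in_cone rS.
  by exists (fun i => y (Some i)); split=> // [j|]; rewrite ?yA -?y1 ?r0 ?mul0r // -yb.
left; have [r rS r0|r rS _|x xP _] := @primal_le_of_bounds (\big[Num.max/0]_(r <- S) ratio r).
- by have := no_cert r rS; rewrite r0 eqxx /= leNgt.
- exact: le_bigmax_seq.
- by exists x.
Qed.

Lemma strong_duality x0 y0 : primal_feasible x0 -> dual_feasible y0 ->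
  exists x y, [/\ primal_feasible x, dual_feasible y & \sum_j c j * x j = \sum_i y i * b i].
Proof.
move=> x0P y0D.
have zero_rows r : r \in S -> r.1 None = 0 -> r.2 <= 0.
  move=> rS r0; pose x0' o := if o is Some j then x0 j else \sum_j c j * x0 j.
  have /(fm_elim_holds coords)/allP/(_ r rS) : all (holds x0') gens.
    exact/all_holds_lp_ineq.
  by rewrite holds_elim // r0 mul0r.
have [pos0|] := eqVneq [seq r <- S | 0 < (r : ineq F (option J)).1 None] [::].
  have [|x xP] := @primal_le_of_bounds (\sum_i y0 i * b i - 1) zero_rows.
    by move=> r rS r_pos; suff : r \in [::] by []; rewrite -pos0 mem_filter r_pos.
  by have := weak_duality xP y0D; lra.
move=> /(exists_argmax_seq ratio)[rs]; rewrite mem_filter => /andP[rs_pos rsS] rs_max.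
have [|x xP cx] := @primal_le_of_bounds (ratio rs) zero_rows.
  by move=> r rS r_pos; apply: rs_max; rewrite mem_filter r_pos.
have [y [y_ge0 yA y1 yb]] := elim_in_cone rsS.
have yN_pos : 0 < y None by rewrite -y1.
pose y' i := y (Some i) / y None.
have y'D : dual_feasible y'.
  split=> [i|j]; first by rewrite divr_ge0.
  under eq_bigr do rewrite mulrAC.
  by rewrite -mulr_suml yA mulrAC divff ?mul1r ?gt_eqF.
have y'b : \sum_i y' i * b i = ratio rs.
  by rewrite /ratio yb y1 mulr_suml; apply: eq_bigr => i _; rewrite mulrAC.
exists x, y'; split=> //; have := weak_duality xP y'D; rewrite y'b; lra.
Qed.

End LPDuality.

Lemma farkas_alternative (F : realFieldType) (I J : finType) (A : I -> J -> F) (b : I -> F) :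
  (exists x, primal_feasible A b x) \/
  exists y : I -> F, [/\ (forall i, 0 <= y i), (forall j, \sum_i y i * A i j = 0)
                      & 0 < \sum_i y i * b i].
Proof.
(* Any objective will do: its row never enters the certificate. *)
exact: fm_farkas_alternative (fun=> 0).
Qed.

Section LayerSum.
Variable F : realFieldType.

(* [layer_sum a u G] integrates over [[a, last a u]] the step function equal to
   [G u_k] on [(u_(k-1), u_k]]. *)
Fixpoint layer_sum (a : F) (u : seq F) (G : F -> F) : F :=
  if u is b :: u' then (b - a) * G b + layer_sum b u' G else 0.

Lemma layer_sumD a u (G1 G2 : F -> F) :
  layer_sum a u (fun t => G1 t + G2 t) = layer_sum a u G1 + layer_sum a u G2.
Proof. by elim: u a => /= [|b u IH] a; rewrite ?addr0 // IH; ring. Qed.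

Lemma layer_sumZ a u k (G : F -> F) :
  layer_sum a u (fun t => k * G t) = k * layer_sum a u G.
Proof. by elim: u a => /= [|b u IH] a; rewrite ?mulr0 // IH; ring. Qed.

Lemma layer_sum_cst a u k : layer_sum a u (fun _ => k) = k * layer_sum a u (fun _ => 1).
Proof. by elim: u a => /= [|b u IH] a; rewrite ?mulr0 // IH; ring. Qed.

Lemma layer_sum_sum a u (T : Type) (r : seq T) (Q : pred T) (G : T -> F -> F) :
  layer_sum a u (fun t => \sum_(i <- r | Q i) G i t) = \sum_(i <- r | Q i) layer_sum a u (G i).
Proof.
elim: u a => /= [|b u IH] a; first by rewrite big1.
by rewrite IH mulr_sumr -big_split.
Qed.

Lemma eq_in_layer_sum a u (G1 G2 : F -> F) : {in u, G1 =1 G2} ->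
  layer_sum a u G1 = layer_sum a u G2.
Proof.
elim: u a => //= b u IH a G12; rewrite G12 ?mem_head // (IH b) // => t tu.
by rewrite G12 // inE tu orbT.
Qed.

Lemma layer_sum_ge a u m (G : F -> F) : path <=%R a u ->
  (forall t, t \in u -> m <= G t) -> m * layer_sum a u (fun _ => 1) <= layer_sum a u G.
Proof.
elim: u a => /= [|b u IH] a; first by rewrite mulr0.
move=> /andP[ab bu] mG; rewrite mulrDr mulr1 mulrC lerD ?ler_wpM2l ?subr_ge0 ?mG ?mem_head //.
by apply: IH => // t tu; rewrite mG // inE tu orbT.
Qed.

Lemma layer_sum_indicator a u x : path <=%R a u -> a <= x -> x \in a :: u ->
  layer_sum a u (fun t => ((t <= x)%R)%:R) = x - a.
Proof.
elim: u a => /= [|b u IH] a; first by move=> _ _; rewrite inE => /eqP->; rewrite subrr.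
move=> /andP[ab bu] ax xu; have [bx|xb] := leP b x.
  rewrite mulr1 IH //; first ring.
  case/predU1P: xu => [xa|//]; suff -> : x = b by rewrite mem_head.
  by apply/le_anti; rewrite bx xa ab.
have b_le t : t \in b :: u -> b <= t.
  by rewrite inE => /predU1P[->//|]; apply/allP/(order_path_min le_trans).
have xa : x = a by case/predU1P: xu => // /b_le; rewrite leNgt xb.
rewrite mulr0 add0r xa subrr -xa.
rewrite (@eq_in_layer_sum _ _ _ (fun _ => 0)) => [|t tu]; first by rewrite layer_sum_cst mul0r.
suff /negbTE-> : ~~ (t <= x) by [].
by rewrite -ltNge (lt_le_trans xb) // b_le // inE tu orbT.
Qed.

Section Grid.
Variable u : seq F.
Hypotheses (u_sorted : path <=%R 0 u) (u_le1 : {in u, forall t, t <= 1}) (u1 : 1 \in u).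

Lemma grid_indicator x : 0 <= x -> x \in 0 :: u -> layer_sum 0 u (fun t => ((t <= x)%R)%:R) = x.
Proof. by move=> x0 xu; rewrite layer_sum_indicator ?subr0. Qed.

Lemma grid_total : layer_sum 0 u (fun _ => 1) = 1.
Proof.
rewrite -[RHS](grid_indicator ler01) ?inE ?u1 ?orbT //.
by apply: eq_in_layer_sum => t /u_le1 ->.
Qed.

Lemma grid_cst k : layer_sum 0 u (fun _ => k) = k.
Proof. by rewrite layer_sum_cst grid_total mulr1. Qed.

Lemma grid_ge m (G : F -> F) : {in u, forall t, m <= G t} -> m <= layer_sum 0 u G.
Proof. by move=> mG; rewrite -[m]mulr1 -grid_total layer_sum_ge. Qed.

End Grid.
End LayerSum.

Lemma sum_mul_affine (R : ringType) (T V P : finType) (mu : T -> R) (W : T -> V -> P -> R)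
    (b : T -> R) (z : V -> P -> R) :
  \sum_m mu m * (\sum_i \sum_p W m i p * z i p - b m) =
  \sum_i \sum_p (\sum_m mu m * W m i p) * z i p - \sum_m mu m * b m.
Proof.
under eq_bigr do rewrite mulrBr.
rewrite sumrB; congr (_ - _).
under eq_bigr do rewrite mulr_sumr.
rewrite exchange_big /=; apply: eq_bigr => i _.
under eq_bigr do rewrite mulr_sumr.
rewrite exchange_big /=; apply: eq_bigr => p _.
by rewrite mulr_suml; apply: eq_bigr => m _; rewrite mulrA.
Qed.

Section ConstrainedLabeling.
Variables (R : realType) (V P : finType) (E : {set V * V}).
Variables (th1 : V -> P -> R) (th2 : V -> V -> P -> P -> R).
Variables (M K : nat) (w : 'I_M -> V -> P -> R) (c : 'I_M -> R)
          (v : 'I_K -> V -> P -> R) (d : 'I_K -> R).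

Local Notation labeling := {ffun V * P -> bool}.
Local Notation energy := (energyI E th1 th2).
Local Notation Lag := (lagrangian E th1 th2 w c v d).
Local Notation D := (dualfun E th1 th2 w c v d).
Local Notation feasible := (lp_feasible E w c v d).
Local Notation objective := (lp_objective E th1 th2).

Definition lp_lagrangian z1 z2 (lam : V -> R) (xi : 'I_M -> R) (pi : 'I_K -> R) :=
  objective z1 z2 + \sum_i lam i * (\sum_p z1 i p - 1)
  + \sum_m xi m * (\sum_i \sum_p w m i p * z1 i p - c m)
  + \sum_k pi k * (\sum_i \sum_p v k i p * z1 i p - d k).

Definition lag_offset (lam : V -> R) (xi : 'I_M -> R) (pi : 'I_K -> R) :=
  - \sum_i lam i - \sum_m xi m * c m - \sum_k pi k * d k.

Definition unary_coef (lam : V -> R) (xi : 'I_M -> R) (pi : 'I_K -> R) i p :=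
  th1 i p + lam i + \sum_m xi m * w m i p + \sum_k pi k * v k i p.

Lemma lp_lagrangianE z1 z2 lam xi pi : lp_lagrangian z1 z2 lam xi pi =
  lag_offset lam xi pi + \sum_i \sum_p unary_coef lam xi pi i p * z1 i p
  + \sum_(e in E) \sum_p \sum_q th2 e.1 e.2 p q * z2 e.1 e.2 p q.
Proof.
have lamE : \sum_i lam i * (\sum_p z1 i p - 1) = \sum_i \sum_p lam i * z1 i p - \sum_i lam i.
  by under eq_bigr do rewrite mulrBr mulr1 mulr_sumr; rewrite sumrB.
rewrite /lp_lagrangian /lp_objective lamE !sum_mul_affine /lag_offset.
have -> : \sum_i \sum_p unary_coef lam xi pi i p * z1 i p =
   \sum_i \sum_p th1 i p * z1 i p + \sum_i \sum_p lam i * z1 i p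
   + \sum_i \sum_p (\sum_m xi m * w m i p) * z1 i p
   + \sum_i \sum_p (\sum_k pi k * v k i p) * z1 i p.
  rewrite -!big_split; apply: eq_bigr => i _ /=; rewrite -!big_split.
  by apply: eq_bigr => p _ /=; rewrite /unary_coef; ring.
ring.
Qed.

Lemma lp_lagrangian_le_objective z1 z2 lam xi pi :
  feasible z1 z2 -> (forall k, 0 <= pi k) -> lp_lagrangian z1 z2 lam xi pi <= objective z1 z2.
Proof.
case=> _ _ z1_assign z1_eq z1_le pi_ge0; rewrite /lp_lagrangian.
rewrite big1 => [|i _]; last by rewrite z1_assign subrr mulr0.
rewrite big1 => [|m _]; last by rewrite z1_eq subrr mulr0.
rewrite addr0 addr0 gerDl; apply: sumr_le0 => k _.
by rewrite mulr_ge0_le0 // subr_le0.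
Qed.

Definition threshold (z1 : V -> P -> R) (t : R) : labeling := [ffun a => t <= z1 a.1 a.2].

Lemma lagrangian_threshold z1 t lam xi pi : Lag (threshold z1 t) lam xi pi =
  lag_offset lam xi pi + \sum_i \sum_p unary_coef lam xi pi i p * ((t <= z1 i p)%R)%:R
  + \sum_(e in E) \sum_p \sum_q th2 e.1 e.2 p q *
      ((t <= Num.min (z1 e.1 p) (z1 e.2 q))%R)%:R.
Proof.
have -> : Lag (threshold z1 t) lam xi pi = lp_lagrangian (yval R (threshold z1 t))
    (fun i j p q => yval R (threshold z1 t) i p * yval R (threshold z1 t) j q) lam xi pi.
  rewrite /lagrangian /lp_lagrangian /energyI /lp_objective; do 4 congr (_ + _).
  by apply: eq_bigr => e _; apply: eq_bigr => p _; apply: eq_bigr => q _; rewrite mulrA.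
rewrite lp_lagrangianE /yval; congr (_ + _ + _).
  by apply: eq_bigr => i _; apply: eq_bigr => p _; rewrite ffunE.
apply: eq_bigr => e _; apply: eq_bigr => p _; apply: eq_bigr => q _.
by rewrite !ffunE le_min; case: (_ <= _)%R; case: (_ <= _)%R; rewrite ?mul1r ?mul0r ?mulr0.
Qed.

(* Thresholding [z1] at a level [t] drawn uniformly from [[0, 1]] gives a random
   labeling whose expected Lagrangian is the LP Lagrangian at [(z1, min)]. *)
Lemma dual_le_lp_lagrangian_min z1 lam xi pi : (forall i p, 0 <= z1 i p <= 1) ->
  D lam xi pi <= lp_lagrangian z1 (fun i j p q => Num.min (z1 i p) (z1 j q)) lam xi pi.
Proof.
move=> z1_01.
pose u := sort <=%R (1 :: [seq z1 a.1 a.2 | a <- enum {: V * P}]).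
have u_sorted : path <=%R 0 u.
  rewrite path_min_sorted ?sort_le_sorted //; apply/allP => t.
  rewrite mem_sort inE => /predU1P[->|/mapP[a _ ->]]; first exact: ler01.
  by case/andP: (z1_01 a.1 a.2).
have u_le1 : {in u, forall t, t <= 1}.
  move=> t; rewrite mem_sort inE => /predU1P[->//|/mapP[a _ ->]].
  by case/andP: (z1_01 a.1 a.2).
have u1 : 1 \in u by rewrite mem_sort mem_head.
have z1_u i p : z1 i p \in 0 :: u.
  by rewrite !inE mem_sort inE (map_f _ (mem_enum _ (i, p))) !orbT.
suff <- : layer_sum 0 u (fun t => Lag (threshold z1 t) lam xi pi) =
    lp_lagrangian z1 (fun i j p q => Num.min (z1 i p) (z1 j q)) lam xi pi.
  by apply: grid_ge => // t _; apply: bigmin_le.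
under eq_in_layer_sum do rewrite lagrangian_threshold.
rewrite 2!layer_sumD grid_cst // !layer_sum_sum lp_lagrangianE; congr (_ + _ + _).
  apply: eq_bigr => i _; rewrite layer_sum_sum; apply: eq_bigr => p _.
  by rewrite layer_sumZ grid_indicator //; case/andP: (z1_01 i p).
apply: eq_bigr => e _; rewrite layer_sum_sum; apply: eq_bigr => p _.
rewrite layer_sum_sum; apply: eq_bigr => q _; rewrite layer_sumZ grid_indicator //.
  by rewrite le_min; case/andP: (z1_01 e.1 p) => -> _; case/andP: (z1_01 e.2 q).
by rewrite /Num.min; case: ifP.
Qed.

Hypothesis th2_le0 : forall e, e \in E -> forall p q, th2 e.1 e.2 p q <= 0.

Lemma dual_le_lp_objective z1 z2 lam xi pi :
  (forall k, 0 <= pi k) -> feasible z1 z2 -> D lam xi pi <= objective z1 z2.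
Proof.
move=> pi_ge0 z_feas; have [z1_01 [_ z2_le] _ _ _] := z_feas.
apply: le_trans (dual_le_lp_lagrangian_min lam xi pi z1_01) _.
apply: le_trans (lp_lagrangian_le_objective lam xi z_feas pi_ge0).
rewrite !lp_lagrangianE lerD2l; apply: ler_sum => e eE.
apply: ler_sum => p _; apply: ler_sum => q _; rewrite ler_wnM2l ?th2_le0 //.
by rewrite le_min; case: (z2_le e eE p q) => -> ->.
Qed.

Definition node_res (y : labeling) i := \sum_p yval R y i p - 1.
Definition eq_res (y : labeling) m := \sum_i \sum_p w m i p * yval R y i p - c m.
Definition le_res (y : labeling) k := \sum_i \sum_p v k i p * yval R y i p - d k.

(* Rows of the convexified problem over distributions [mu] on labelings:
   [mu y >= 0], [\sum_y mu y = 1] and the averaged constraints, each equality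
   written as two opposite inequalities. *)
Definition conv_row := (labeling + (bool + ((V + V) + (('I_M + 'I_M) + 'I_K))))%type.

Definition conv_mx (r : conv_row) (y : labeling) : R :=
  match r with
  | inl y' => (y' == y)%:R
  | inr (inl s) => if s then 1 else -1
  | inr (inr (inl (inl i))) => node_res y i
  | inr (inr (inl (inr i))) => - node_res y i
  | inr (inr (inr (inl (inl m)))) => eq_res y m
  | inr (inr (inr (inl (inr m)))) => - eq_res y m
  | inr (inr (inr (inr k))) => - le_res y k
  end.

Definition conv_rhs (r : conv_row) : R := if r is inr (inl s) then if s then 1 else -1 else 0.

Definition total_of (z : conv_row -> R) := z (inr (inl true)) - z (inr (inl false)).
Definition lam_of (z : conv_row -> R) i :=
  z (inr (inr (inl (inr i)))) - z (inr (inr (inl (inl i)))).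
Definition xi_of (z : conv_row -> R) m :=
  z (inr (inr (inr (inl (inr m))))) - z (inr (inr (inr (inl (inl m))))).
Definition pi_of (z : conv_row -> R) k := z (inr (inr (inr (inr k)))).

Lemma conv_rhs_sum z : \sum_r z r * conv_rhs r = total_of z.
Proof. by rewrite !big_sumType big_bool /= !big1 => *; rewrite ?mulr0 // /total_of; ring. Qed.

Lemma lagrangian_of_conv_dual z y :
  Lag y (lam_of z) (xi_of z) (pi_of z) =
  energy y + z (inl y) + total_of z - \sum_r z r * conv_mx r y.
Proof.
have sum_diff (T : finType) (a b g : T -> R) :
    \sum_i (a i - b i) * g i = \sum_i a i * g i - \sum_i b i * g i.
  by rewrite -sumrB; apply: eq_bigr => i _; rewrite mulrBl.
have sum_mulN (T : finType) (a g : T -> R) : \sum_i a i * - g i = - \sum_i a i * g i.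
  by rewrite -sumrN; apply: eq_bigr => i _; rewrite mulrN.
rewrite !big_sumType big_bool /= (bigD1 y) //= eqxx mulr1 big1 => [|y' /negbTE->]; last first.
  by rewrite mulr0.
rewrite !sum_mulN /lagrangian /lam_of /xi_of /pi_of !sum_diff.
by rewrite /node_res /eq_res /le_res /total_of; ring.
Qed.

Lemma dualfun_ge m lam xi pi : (forall y, m <= Lag y lam xi pi) -> m <= D lam xi pi.
Proof. by move=> mL; apply: le_bigmin. Qed.

Lemma dualfun_ge_conv_dual z : dual_feasible conv_mx energy z ->
  total_of z <= D (lam_of z) (xi_of z) (pi_of z).
Proof.
case=> z_ge0 zA; apply: dualfun_ge => y.
by rewrite lagrangian_of_conv_dual zA; have := z_ge0 (inl y); lra.
Qed.

Definition min_energy := \big[Num.min/energy [ffun => false]]_y energy y.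

Lemma min_energy_le y : min_energy <= energy y.
Proof. exact: bigmin_le. Qed.

Lemma dualfun_unbounded z : (forall r, 0 <= z r) ->
  (forall y, \sum_r z r * conv_mx r y = 0) -> 0 < \sum_r z r * conv_rhs r ->
  forall m, exists lam xi pi, (forall k, 0 <= pi k) /\ m < D lam xi pi.
Proof.
move=> z_ge0 zA; rewrite conv_rhs_sum => z_pos m.
pose t := (`|m - min_energy| + 1) / total_of z.
have t_ge0 : 0 <= t by apply: divr_ge0; [apply: addr_ge0 | apply: ltW].
pose zt r := t * z r.
exists (lam_of zt), (xi_of zt), (pi_of zt); split=> [k|]; first exact: mulr_ge0 t_ge0 (z_ge0 _).
apply: (@lt_le_trans _ _ (m + 1)); first lra.
apply: dualfun_ge => y; rewrite lagrangian_of_conv_dual.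
have -> : \sum_r zt r * conv_mx r y = 0.
  by under eq_bigr do rewrite -mulrA; rewrite -mulr_sumr zA mulr0.
have -> : total_of zt = `|m - min_energy| + 1 by rewrite /total_of -mulrBr divfK ?gt_eqF.
have := min_energy_le y; have : 0 <= zt (inl y) by apply: mulr_ge0.
have := ler_norm (m - min_energy); lra.
Qed.

Lemma conv_feasibleE mu : primal_feasible conv_mx conv_rhs mu ->
  [/\ (forall y, 0 <= mu y), \sum_y mu y = 1,
      (forall i, \sum_y node_res y i * mu y = 0),
      (forall m, \sum_y eq_res y m * mu y = 0) &
      (forall k, \sum_y le_res y k * mu y <= 0)].
Proof.
have sum_mulN (a g : labeling -> R) : \sum_y - a y * g y = - \sum_y a y * g y.
  by rewrite -sumrN; apply: eq_bigr => y _; rewrite mulNr.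
move=> muP; split=> [y|||m|k].
- have := muP (inl y); rewrite /= (bigD1 y) //= eqxx mul1r big1 ?addr0 // => y' y'y.
  by rewrite eq_sym (negbTE y'y) mul0r.
- have := muP (inr (inl true)); have := muP (inr (inl false)); rewrite /=.
  rewrite -!mulr_sumr mul1r mulN1r; lra.
- move=> i; have := muP (inr (inr (inl (inl i)))); have := muP (inr (inr (inl (inr i)))).
  rewrite /= sum_mulN; lra.
- have := muP (inr (inr (inr (inl (inl m))))); have := muP (inr (inr (inr (inl (inr m))))).
  rewrite /= sum_mulN; lra.
- by have := muP (inr (inr (inr (inr k)))); rewrite /= sum_mulN oppr_ge0.
Qed.

Lemma yval_ge0 (y : labeling) i p : 0 <= yval R y i p.
Proof. exact: ler0n. Qed.

Lemma yval_le1 (y : labeling) i p : yval R y i p <= 1.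
Proof. by rewrite /yval lern1 leq_b1. Qed.

Section Marginals.
Variable mu : labeling -> R.

Definition marginal1 i p := \sum_y mu y * yval R y i p.
Definition marginal2 i j p q := \sum_y mu y * (yval R y i p * yval R y j q).

Lemma exchange_mean (T : finType) (Q : pred T) (f : T -> labeling -> R) :
  \sum_(t | Q t) \sum_y mu y * f t y = \sum_y mu y * \sum_(t | Q t) f t y.
Proof. by rewrite exchange_big; apply: eq_bigr => y _; rewrite mulr_sumr. Qed.

Lemma sum_mul_mean (T : finType) (a : T -> R) (f : T -> labeling -> R) :
  \sum_t a t * (\sum_y mu y * f t y) = \sum_y mu y * \sum_t a t * f t y.
Proof.
rewrite -exchange_mean; apply: eq_bigr => t _; rewrite mulr_sumr.
by apply: eq_bigr => y _; rewrite mulrCA.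
Qed.

Lemma sum_mul_marginal1 (W : V -> P -> R) :
  \sum_i \sum_p W i p * marginal1 i p = \sum_y mu y * \sum_i \sum_p W i p * yval R y i p.
Proof. by under eq_bigr do rewrite sum_mul_mean; rewrite exchange_mean. Qed.

Lemma sum_mul_marginal2 :
  \sum_(e in E) \sum_p \sum_q th2 e.1 e.2 p q * marginal2 e.1 e.2 p q =
  \sum_y mu y * \sum_(e in E) \sum_p \sum_q th2 e.1 e.2 p q * yval R y e.1 p * yval R y e.2 q.
Proof.
under eq_bigr do under eq_bigr do rewrite sum_mul_mean.
under eq_bigr do rewrite exchange_mean.
rewrite exchange_mean; apply: eq_bigr => y _; congr (_ * _).
by do 3!(apply: eq_bigr => ? _); rewrite mulrA.
Qed.

Lemma objective_marginal : objective marginal1 marginal2 = \sum_y energy y * mu y.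
Proof.
rewrite /lp_objective sum_mul_marginal1 sum_mul_marginal2 -big_split.
by apply: eq_bigr => y _ /=; rewrite -mulrDr mulrC.
Qed.

Hypotheses (mu_ge0 : forall y, 0 <= mu y) (mu_sum1 : \sum_y mu y = 1).

Lemma mean_le (f g : labeling -> R) : (forall y, f y <= g y) ->
  \sum_y mu y * f y <= \sum_y mu y * g y.
Proof. by move=> fg; apply: ler_sum => y _; rewrite ler_wpM2l. Qed.

Lemma mean_01 (f : labeling -> R) : (forall y, 0 <= f y <= 1) -> 0 <= \sum_y mu y * f y <= 1.
Proof.
move=> f01; apply/andP; split.
  by apply: sumr_ge0 => y _; rewrite mulr_ge0 //; case/andP: (f01 y).
apply: le_trans (@mean_le _ (fun => 1) _) _ => [y|]; first by case/andP: (f01 y).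
by under eq_bigr do rewrite mulr1; rewrite mu_sum1.
Qed.

Lemma mean_sub (f : labeling -> R) a :
  \sum_y (f y - a) * mu y = \sum_y mu y * f y - a.
Proof.
rewrite [X in _ - X](_ : a = \sum_y mu y * a); last by rewrite -mulr_suml mu_sum1 mul1r.
by rewrite -sumrB; apply: eq_bigr => y _; ring.
Qed.

End Marginals.

Lemma marginal_feasible mu : primal_feasible conv_mx conv_rhs mu ->
  feasible (marginal1 mu) (marginal2 mu).
Proof.
case/conv_feasibleE=> mu_ge0 mu_sum1 node0 eq0 le0; split.
- by move=> i p; apply: mean_01 => // y; rewrite yval_ge0 yval_le1.
- split=> e _ p q.
    by apply: mean_01 => // y; rewrite mulr_ge0 ?mulr_ile1 ?yval_ge0 ?yval_le1.
  by split; apply: mean_le => // y; rewrite ?ler_piMr ?ler_piMl ?yval_ge0 ?yval_le1.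
- move=> i; have := node0 i; rewrite /node_res mean_sub // /marginal1 exchange_mean.
  by move/eqP; rewrite subr_eq0 => /eqP.
- move=> m; have := eq0 m; rewrite /eq_res mean_sub // sum_mul_marginal1.
  by move/eqP; rewrite subr_eq0 => /eqP.
- by move=> k; have := le0 k; rewrite /le_res mean_sub // sum_mul_marginal1 subr_le0.
Qed.

Lemma conv_dual_feasible_exists : exists z, dual_feasible conv_mx energy z.
Proof.
pose z (r : conv_row) := match r with
  | inl y => energy y + `|min_energy|
  | inr (inl false) => `|min_energy|
  | _ => 0 end.
exists z; split=> [[y|[[]|r]]|y] /=.
- by have := min_energy_le y; have := ler_norm (- min_energy); rewrite normrN; lra.
- by [].
- by [].
- by case: r => [[]|[[]|]].
-
rewrite !big_sumType big_bool /= (bigD1 y) //= eqxx mulr1 big1 => [|y' /negbTE->].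
  by rewrite !big1 => *; rewrite ?mul0r //; ring.
by rewrite mulr0.
Qed.

Lemma lp_infeasible_dual_unbounded : ~ (exists y1 y2, feasible y1 y2) ->
  forall m, exists lam xi pi, (forall k, 0 <= pi k) /\ m < D lam xi pi.
Proof.
move=> infeas; have [[mu muP]|[z [z_ge0 zA z_pos]]] := farkas_alternative conv_mx conv_rhs.
  by case: infeas; exists (marginal1 mu), (marginal2 mu); apply: marginal_feasible.
exact: dualfun_unbounded.
Qed.

Lemma lp_feasible_strong_duality : (exists y1 y2, feasible y1 y2) ->
  exists lam xi pi, [/\ (forall k, 0 <= pi k),
     (forall lam' xi' pi', (forall k, 0 <= pi' k) -> D lam' xi' pi' <= D lam xi pi) &
     exists y1 y2, [/\ feasible y1 y2,
        (forall z1 z2, feasible z1 z2 -> objective y1 y2 <= objective z1 z2) &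
        D lam xi pi = objective y1 y2]].
Proof.
case=> z1 [z2 z_feas].
have [[mu0 mu0P]|[z [z_ge0 zA z_pos]]] := farkas_alternative conv_mx conv_rhs; last first.
  have [lam [xi [pi [pi_ge0]]]] := dualfun_unbounded z_ge0 zA z_pos (objective z1 z2).
  by rewrite ltNge dual_le_lp_objective.
have [z0 z0D] := conv_dual_feasible_exists.
have [mu [z [muP zD opt]]] := strong_duality mu0P z0D.
rewrite conv_rhs_sum -objective_marginal in opt.
have marg_feas := marginal_feasible muP.
have pi_ge0 k : 0 <= pi_of z k by case: zD => z_ge0 _; apply: z_ge0.
have Dz : D (lam_of z) (xi_of z) (pi_of z) = objective (marginal1 mu) (marginal2 mu).
  by apply/le_anti; rewrite dual_le_lp_objective // opt dualfun_ge_conv_dual.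
exists (lam_of z), (xi_of z), (pi_of z); split=> // [lam' xi' pi' pi'_ge0|].
  by rewrite Dz dual_le_lp_objective.
exists (marginal1 mu), (marginal2 mu); split=> // z1' z2' z'_feas.
by rewrite -Dz dual_le_lp_objective.
Qed.

End ConstrainedLabeling.

Theorem theorem7 (R : realType) (V P : finType) (E : {set V * V})
  (th1 : V -> P -> R) (th2 : V -> V -> P -> P -> R)
  (M K : nat) (w : 'I_M -> V -> P -> R) (c : 'I_M -> R)
  (v : 'I_K -> V -> P -> R) (d : 'I_K -> R) :
  (forall i j, (i, j) \in E -> i != j) ->
  (forall i j, (i, j) \in E -> (j, i) \notin E) ->
  (forall e, e \in E -> forall p q, th2 e.1 e.2 p q <= 0) ->
  (* feasible LP: the maximum of D is attained and equals the LP optimum *)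
  ((exists y1 y2, lp_feasible E w c v d y1 y2) ->
   exists (lam : V -> R) (xi : 'I_M -> R) (pi : 'I_K -> R),
     [/\ (forall k, 0 <= pi k),
         (forall lam' xi' pi', (forall k, 0 <= pi' k) ->
             dualfun E th1 th2 w c v d lam' xi' pi'
               <= dualfun E th1 th2 w c v d lam xi pi) &
         exists y1 y2,
           [/\ lp_feasible E w c v d y1 y2,
               (forall z1 z2, lp_feasible E w c v d z1 z2 ->
                   lp_objective E th1 th2 y1 y2 <= lp_objective E th1 th2 z1 z2) &
               dualfun E th1 th2 w c v d lam xi pi = lp_objective E th1 th2 y1 y2]])
  /\
  (* infeasible LP (optimal value +oo): D is unbounded above *)
  (~ (exists y1 y2, lp_feasible E w c v d y1 y2) ->
   forall r : R, exists (lam : V -> R) (xi : 'I_M -> R) (pi : 'I_K -> R),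
     (forall k, 0 <= pi k) /\ r < dualfun E th1 th2 w c v d lam xi pi).
Proof.
move=> _ _ th2_le0; split; first exact: lp_feasible_strong_duality.
exact: lp_infeasible_dual_unbounded.
Qed.
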